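(* Let $t_f>0$, let $S\subset\mathbb R^3$ be a finite set of source points and $C$ a finite set of $N_C\ge1$ QBX centers, each $c\in C$ having an expansion radius $r_c>0$ and being owned by a box $b_c$ of an octree with $c\in b_c$. Define $M_C:=\frac1{N_C}\sum_{c\in C}\big|S\cap\{x:|x-c|_\infty\le4\sqrt3\,r_c/t_f\}\big|$. Then the number of pairs $(s,c)\in S\times C$ such that $c$ is suspended in $b_c$ and $s$ lies in the $2$-near neighborhood of $b_c$ is at most $N_CM_C$.
   Context: An octree is a rooted tree of axis-aligned closed cubes (''boxes'') in $\mathbb R^3$. For a box $b$, $|b|$ denotes its $\ell^\infty$ radius and $c_b$ its center. The $k$-near neighborhood of $b$ is the closed cube $\{x:|x-c_b|_\infty\le|b|(1+2k)\}$. $\mathsf{TCR}(b)$ is the closed Euclidean ball of radius $\sqrt3|b|(1+t_f)$ centered at $c_b$. A center $c\in b$ with radius $r_c$ is suspended in $b$ if for every one of the eight cubes $b'$ of radius $|b|/2$ obtained by bisecting $b$ along each axis that contains $c$, the closed Euclidean ball $\{x:|x-c|_2\le r_c\}$ is not contained in $\mathsf{TCR}(b')$. *)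

From Stdlib Require Import Reals Lra List Classical ClassicalEpsilon.
Import ListNotations.
Open Scope R_scope.

Definition point : Type := (R * R * R)%type.

Definition px (p : point) : R := fst (fst p).
Definition py (p : point) : R := snd (fst p).
Definition pz (p : point) : R := snd p.

Definition mkpt (x y z : R) : point := (x, y, z).

Definition dist_inf (p q : point) : R :=
  Rmax (Rabs (px p - px q)) (Rmax (Rabs (py p - py q)) (Rabs (pz p - pz q))).

Definition dist2 (p q : point) : R :=
  sqrt ((px p - px q) ^ 2 + (py p - py q) ^ 2 + (pz p - pz q) ^ 2).

(** An axis-aligned closed cube: center c_b and l^infinity radius |b|. *)
Record box : Type := mkBox { bctr : point; brad : R }.

Definition in_box (x : point) (b : box) : Prop := dist_inf x (bctr b) <= brad b.

Definition sgn (s : bool) : R := if s then 1 else -1.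

Definition child (b : box) (sx sy sz : bool) : box :=
  mkBox (mkpt (px (bctr b) + sgn sx * (brad b / 2))
              (py (bctr b) + sgn sy * (brad b / 2))
              (pz (bctr b) + sgn sz * (brad b / 2)))
        (brad b / 2).

Definition near_nbhd (k : nat) (b : box) (x : point) : Prop :=
  dist_inf x (bctr b) <= brad b * (1 + 2 * INR k).

Definition in_ball (c : point) (r : R) (x : point) : Prop := dist2 x c <= r.

Definition TCR (tf : R) (b : box) (x : point) : Prop :=
  in_ball (bctr b) (sqrt 3 * brad b * (1 + tf)) x.

Definition suspended (tf : R) (c : point) (rc : R) (b : box) : Prop :=
  forall sx sy sz : bool,
    in_box c (child b sx sy sz) ->
    ~ (forall x, in_ball c rc x -> TCR tf (child b sx sy sz) x).

Definition countP {A : Type} (P : A -> Prop) (l : list A) : nat :=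
  length (filter (fun a => if excluded_middle_informative (P a) then true else false) l).

Definition sumR {A : Type} (f : A -> R) (l : list A) : R :=
  fold_right (fun a acc => f a + acc) 0 l.

(* A suspended center c must have a large radius relative to its box b:
   c lies in some child b' of b, and if r_c <= sqrt 3 (|b|/2) t_f the triangle
   inequality would put the ball of radius r_c around c inside TCR(b'), since
   |c - c_b'|_2 <= sqrt 3 |b|/2.  Hence |b| < 2 r_c / (sqrt 3 t_f), and every
   point of the 2-near neighborhood of b lies within 6|b| <= 4 sqrt 3 r_c / t_f
   of c in the l^infinity norm.  Every counted pair (s, c) is therefore also
   counted by N_C M_C = sum_c |S cap {x : |x - c|_inf <= 4 sqrt 3 r_c / t_f}|. *)

From Stdlib Require Import Reals List Lra Lia ClassicalEpsilon.
Open Scope R_scope.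

Lemma Rabs_le_between (x m : R) : Rabs x <= m -> - m <= x <= m.
Proof.
  intros H; pose proof (Rle_abs x); pose proof (Rle_abs (- x)).
  rewrite Rabs_Ropp in *; lra.
Qed.

Lemma dist_inf_le_iff (p q : point) (m : R) :
  dist_inf p q <= m <->
  (- m <= px p - px q <= m /\ - m <= py p - py q <= m /\ - m <= pz p - pz q <= m).
Proof.
  unfold dist_inf; split.
  - intros H.
    pose proof (Rmax_l (Rabs (px p - px q)) (Rmax (Rabs (py p - py q)) (Rabs (pz p - pz q)))).
    pose proof (Rmax_r (Rabs (px p - px q)) (Rmax (Rabs (py p - py q)) (Rabs (pz p - pz q)))).
    pose proof (Rmax_l (Rabs (py p - py q)) (Rabs (pz p - pz q))).
    pose proof (Rmax_r (Rabs (py p - py q)) (Rabs (pz p - pz q))).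
    split; [|split]; apply Rabs_le_between; lra.
  - intros (Hx & Hy & Hz); repeat apply Rmax_lub; apply Rabs_le; assumption.
Qed.

Lemma cauchy_schwarz3 (u1 u2 u3 v1 v2 v3 : R) :
  u1 * v1 + u2 * v2 + u3 * v3 <=
  sqrt (u1 ^ 2 + u2 ^ 2 + u3 ^ 2) * sqrt (v1 ^ 2 + v2 ^ 2 + v3 ^ 2).
Proof.
  set (d := u1 * v1 + u2 * v2 + u3 * v3).
  assert (Hlagrange :
    (u1 ^ 2 + u2 ^ 2 + u3 ^ 2) * (v1 ^ 2 + v2 ^ 2 + v3 ^ 2) =
    Rsqr d + ((u1 * v2 - u2 * v1) ^ 2 + (u1 * v3 - u3 * v1) ^ 2
              + (u2 * v3 - u3 * v2) ^ 2)) by (unfold d, Rsqr; ring).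
  pose proof (pow2_ge_0 u1); pose proof (pow2_ge_0 u2); pose proof (pow2_ge_0 u3).
  rewrite <- sqrt_mult_alt by lra.
  apply Rle_trans with (Rabs d); [apply Rle_abs|].
  rewrite <- sqrt_Rsqr_abs; apply sqrt_le_1_alt; rewrite Hlagrange.
  pose proof (pow2_ge_0 (u1 * v2 - u2 * v1)); pose proof (pow2_ge_0 (u1 * v3 - u3 * v1)).
  pose proof (pow2_ge_0 (u2 * v3 - u3 * v2)); lra.
Qed.

Lemma dist2_triangle (x y z : point) : dist2 x z <= dist2 x y + dist2 y z.
Proof.
  unfold dist2.
  set (u1 := px x - px y); set (u2 := py x - py y); set (u3 := pz x - pz y).
  set (v1 := px y - px z); set (v2 := py y - py z); set (v3 := pz y - pz z).
  replace (px x - px z) with (u1 + v1) by (unfold u1, v1; ring).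
  replace (py x - py z) with (u2 + v2) by (unfold u2, v2; ring).
  replace (pz x - pz z) with (u3 + v3) by (unfold u3, v3; ring).
  set (U := u1 ^ 2 + u2 ^ 2 + u3 ^ 2); set (V := v1 ^ 2 + v2 ^ 2 + v3 ^ 2).
  assert (HU : 0 <= U) by (unfold U; nra).
  assert (HV : 0 <= V) by (unfold V; nra).
  pose proof (cauchy_schwarz3 u1 u2 u3 v1 v2 v3) as HCS; fold U V in HCS.
  pose proof (sqrt_sqrt U HU); pose proof (sqrt_sqrt V HV).
  pose proof (sqrt_pos U); pose proof (sqrt_pos V).
  rewrite <- (sqrt_Rsqr (sqrt U + sqrt V)) by lra.
  apply sqrt_le_1_alt; unfold Rsqr, U, V in *; nra.
Qed.

Lemma dist2_le_sqrt3_dist_inf (x y : point) (m : R) :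
  dist_inf x y <= m -> dist2 x y <= sqrt 3 * m.
Proof.
  intros H; apply dist_inf_le_iff in H as ([? ?] & [? ?] & [? ?]).
  assert (Hm : 0 <= m) by lra.
  unfold dist2; rewrite <- (sqrt_pow2 m Hm), <- sqrt_mult_alt by lra.
  apply sqrt_le_1_alt; nra.
Qed.

Lemma in_box_child (c : point) (b : box) :
  in_box c b -> exists sx sy sz, in_box c (child b sx sy sz).
Proof.
  intros Hc; apply dist_inf_le_iff in Hc as ([? ?] & [? ?] & [? ?]).
  exists (if Rle_dec (px (bctr b)) (px c) then true else false),
         (if Rle_dec (py (bctr b)) (py c) then true else false),
         (if Rle_dec (pz (bctr b)) (pz c) then true else false).
  unfold in_box, child; simpl; apply dist_inf_le_iff; unfold px, py, pz, mkpt in *; simpl.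
  repeat split;
    repeat match goal with |- context [Rle_dec ?a ?b] => destruct (Rle_dec a b) end;
    simpl; lra.
Qed.

Lemma suspended_radius_gt (tf : R) (c : point) (rc : R) (b : box) :
  0 < tf -> in_box c b -> suspended tf c rc b ->
  sqrt 3 * (brad b / 2) * tf < rc.
Proof.
  intros Htf Hc Hsus.
  destruct (in_box_child c b Hc) as (sx & sy & sz & Hchild).
  assert (Hcenter : dist2 c (bctr (child b sx sy sz)) <= sqrt 3 * (brad b / 2))
    by exact (dist2_le_sqrt3_dist_inf _ _ _ Hchild).
  apply Rnot_le_lt; intros Hsmall; apply (Hsus sx sy sz Hchild).
  intros x Hx; unfold in_ball in Hx; unfold TCR, in_ball.
  pose proof (dist2_triangle x c (bctr (child b sx sy sz))).
  change (brad (child b sx sy sz)) with (brad b / 2).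
  replace (sqrt 3 * (brad b / 2) * (1 + tf))
    with (sqrt 3 * (brad b / 2) + sqrt 3 * (brad b / 2) * tf) by ring; lra.
Qed.

Lemma near_nbhd2_dist_inf (c s : point) (b : box) :
  in_box c b -> near_nbhd 2 b s -> dist_inf s c <= 6 * brad b.
Proof.
  unfold in_box, near_nbhd; replace (INR 2) with 2 by (simpl; lra).
  rewrite !dist_inf_le_iff; intros ([? ?] & [? ?] & [? ?]) ([? ?] & [? ?] & [? ?]).
  repeat split; lra.
Qed.

Lemma suspended_near_dist_inf (tf : R) (c s : point) (rc : R) (b : box) :
  0 < tf -> in_box c b -> suspended tf c rc b -> near_nbhd 2 b s ->
  dist_inf s c <= 4 * sqrt 3 * rc / tf.
Proof.
  intros Htf Hc Hsus Hnear.
  pose proof (suspended_radius_gt tf c rc b Htf Hc Hsus) as Hr.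
  pose proof (near_nbhd2_dist_inf c s b Hc Hnear).
  assert (H3 : sqrt 3 * sqrt 3 = 3) by (apply sqrt_sqrt; lra).
  assert (6 * brad b <= 4 * sqrt 3 * rc / tf).
  { apply (Rmult_le_reg_r tf); [lra|].
    replace (4 * sqrt 3 * rc / tf * tf) with (4 * sqrt 3 * rc) by (field; lra).
    assert (Hs3 : 0 < 4 * sqrt 3) by (pose proof (sqrt_lt_R0 3 ltac:(lra)); lra).
    pose proof (Rmult_lt_compat_l _ _ _ Hs3 Hr).
    assert (4 * sqrt 3 * (sqrt 3 * (brad b / 2) * tf) = 6 * brad b * tf)
      by (transitivity (2 * (sqrt 3 * sqrt 3) * brad b * tf); [field | rewrite H3; ring]).
    lra. }
  lra.
Qed.

Lemma countP_cons {A : Type} (P : A -> Prop) (a : A) (l : list A) :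
  countP P (a :: l) =
  ((if excluded_middle_informative (P a) then 1 else 0) + countP P l)%nat.
Proof. unfold countP; simpl; destruct (excluded_middle_informative (P a)); reflexivity. Qed.

Lemma countP_app {A : Type} (P : A -> Prop) (l1 l2 : list A) :
  countP P (l1 ++ l2) = (countP P l1 + countP P l2)%nat.
Proof. unfold countP; rewrite filter_app, length_app; reflexivity. Qed.

Lemma countP_le {A : Type} (P Q : A -> Prop) (l : list A) :
  (forall a, In a l -> P a -> Q a) -> (countP P l <= countP Q l)%nat.
Proof.
  induction l as [|a l IH]; intros H; [unfold countP; simpl; lia|].
  rewrite !countP_cons.
  specialize (IH (fun x hx => H x (or_intror hx))).
  destruct (excluded_middle_informative (P a)) as [HP|],
           (excluded_middle_informative (Q a)) as [|HQ]; try lia.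
  exfalso; apply HQ, H; [left|]; auto.
Qed.

Lemma countP_list_prod {A B : Type} (Q : B -> A -> Prop) (S : list A) (C : list B) :
  INR (countP (fun ab : A * B => Q (snd ab) (fst ab)) (list_prod S C)) =
  sumR (fun c => INR (countP (Q c) S)) C.
Proof.
  induction S as [|s S IH]; simpl.
  - unfold countP; simpl; induction C as [|c C IHC]; simpl; lra.
  - rewrite countP_app, plus_INR, IH; clear IH.
    induction C as [|c C IHC]; simpl.
    + unfold countP; simpl; lra.
    + rewrite countP_cons, plus_INR, countP_cons, plus_INR; simpl; lra.
Qed.

Theorem mainTheorem5
  (tf : R) (S C : list point) (r : point -> R) (b : point -> box) :
  0 < tf ->
  NoDup S ->
  NoDup C ->
  (1 <= length C)%nat ->
  (forall c, In c C -> 0 < r c) ->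
  (forall c, In c C -> 0 < brad (b c)) ->
  (forall c, In c C -> in_box c (b c)) ->
  let NC := INR (length C) in
  let MC := / NC * sumR (fun c =>
              INR (countP (fun s => dist_inf s c <= 4 * sqrt 3 * r c / tf) S)) C in
  INR (countP (fun sc : point * point =>
                 suspended tf (snd sc) (r (snd sc)) (b (snd sc)) /\
                 near_nbhd 2 (b (snd sc)) (fst sc))
              (list_prod S C))
  <= NC * MC.
Proof.
  intros Htf _ _ HC _ _ Hin NC MC.
  assert (HNC : 0 < NC) by (unfold NC; apply lt_0_INR; lia).
  unfold MC; rewrite <- Rmult_assoc, Rinv_r, Rmult_1_l by lra.
  rewrite <- (countP_list_prod (fun c s => dist_inf s c <= 4 * sqrt 3 * r c / tf)).
  apply le_INR, countP_le.
  intros [s c] Hsc [Hsus Hnear]; simpl in *.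
  apply in_prod_iff in Hsc as [_ Hc].
  exact (suspended_near_dist_inf tf c s (r c) (b c) Htf (Hin c Hc) Hsus Hnear).
Qed.
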